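(* Let $(X,\rho)$ be a geodesic metric space. (i) If $X$ is an $\mathbb R$-tree, then for every point $o\in X$ there exists a unique partial order $\preceq$ on $X$ such that $(X,\rho,\preceq)$ is an upper-semilinear metric $\vee$-semilattice with root $o$. Moreover, in this order every nonempty subset $A\subset X$ has a supremum. (ii) Conversely, if $X$ admits a partial order $\preceq$ such that $(X,\rho,\preceq)$ is an upper-semilinear metric $\vee$-semilattice, then $X$ is an $\mathbb R$-tree.
   Context: A segment $[xy]$ in a metric space is the image of a map $\gamma:[\alpha,\beta]\to X$ with $\rho(\gamma(s),\gamma(t))=|s-t|$ for all $s,t$, $\gamma(\alpha)=x$, $\gamma(\beta)=y$. A metric space is geodesic if any two points are joined by a segment. A geodesic metric space $X$ is an $\mathbb R$-tree if any two points are joined by a unique segment and, for all $x,y,z\in X$, $[xy]\subset[xz]\cup[zy]$. For a partial order $\preceq$ on $X$, the pair $(X,\preceq)$ is a $\vee$-semilattice if any two points $x,y$ have a supremum $x\vee y$. The triple $(X,\rho,\preceq)$ is a metric $\vee$-semilattice if $(X,\preceq)$ is a $\vee$-semilattice and (1) for all $x,y,z$ with $x\preceq z\preceq y$ one has $\rho(x,z)+\rho(z,y)=\rho(x,y)$, and (2) for all $x,y$ one has $\rho(x,y)=\rho(x,x\vee y)+\rho(x\vee y,y)$. The order is upper-semilinear if for every $x$ the upper cone $U_x=\{y\in X: x\preceq y\}$ is linearly ordered. ''With root $o$'' means that $o$ is the greatest element of $(X,\preceq)$. *)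

From Stdlib Require Import Reals.
Open Scope R_scope.

Definition is_metric {X : Type} (rho : X -> X -> R) : Prop :=
  (forall x y, 0 <= rho x y) /\
  (forall x y, rho x y = 0 <-> x = y) /\
  (forall x y, rho x y = rho y x) /\
  (forall x y z, rho x z <= rho x y + rho y z).

Definition is_segment {X : Type} (rho : X -> X -> R) (x y : X) (S : X -> Prop) : Prop :=
  exists (a b : R) (gamma : R -> X),
    a <= b /\
    (forall s t, a <= s <= b -> a <= t <= b -> rho (gamma s) (gamma t) = Rabs (s - t)) /\
    gamma a = x /\ gamma b = y /\
    (forall z, S z <-> exists t, a <= t <= b /\ gamma t = z).

Definition geodesic {X : Type} (rho : X -> X -> R) : Prop :=
  forall x y, exists S, is_segment rho x y S.

Definition R_tree {X : Type} (rho : X -> X -> R) : Prop :=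
  geodesic rho /\
  (forall x y S1 S2, is_segment rho x y S1 -> is_segment rho x y S2 ->
     forall z, S1 z <-> S2 z) /\
  (forall x y z Sxy Sxz Szy,
     is_segment rho x y Sxy -> is_segment rho x z Sxz -> is_segment rho z y Szy ->
     forall w, Sxy w -> Sxz w \/ Szy w).

Definition partial_order {X : Type} (le : X -> X -> Prop) : Prop :=
  (forall x, le x x) /\
  (forall x y, le x y -> le y x -> x = y) /\
  (forall x y z, le x y -> le y z -> le x z).

Definition is_sup {X : Type} (le : X -> X -> Prop) (A : X -> Prop) (s : X) : Prop :=
  (forall a, A a -> le a s) /\
  (forall u, (forall a, A a -> le a u) -> le s u).

Definition pair_set {X : Type} (x y : X) : X -> Prop := fun z => z = x \/ z = y.

Definition join_semilattice {X : Type} (le : X -> X -> Prop) : Prop :=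
  partial_order le /\ forall x y, exists s, is_sup le (pair_set x y) s.

(* (X, rho, le) is a metric join-semilattice; x \/ y is any supremum of {x,y}
   (unique by antisymmetry). *)
Definition metric_join_semilattice {X : Type} (rho : X -> X -> R) (le : X -> X -> Prop) : Prop :=
  join_semilattice le /\
  (forall x y z, le x z -> le z y -> rho x z + rho z y = rho x y) /\
  (forall x y s, is_sup le (pair_set x y) s -> rho x y = rho x s + rho s y).

Definition upper_semilinear {X : Type} (le : X -> X -> Prop) : Prop :=
  forall x y z, le x y -> le x z -> le y z \/ le z y.

Definition has_root {X : Type} (le : X -> X -> Prop) (o : X) : Prop :=
  forall x, le x o.

Definition usl_mjs_rooted {X : Type} (rho : X -> X -> R) (le : X -> X -> Prop) (o : X) : Prop :=
  metric_join_semilattice rho le /\ upper_semilinear le /\ has_root le o.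

From Stdlib Require Import Reals Lra Classical.
Open Scope R_scope.

Set Implicit Arguments.

(* Everything is phrased through metric betweenness: z is between x and y when
   rho x z + rho z y = rho x y.

   (i) In an R-tree the order with root o is "y lies between x and o"; the join
   of x and y is the branch point of the tripod x, y, o, found on [x o] at the
   Gromov product distance.  Any rooted metric join-semilattice order coincides
   with it, because y <= o and x <= x \/ y <= o force x \/ y = y as soon as y is
   between x and o.  The supremum of a nonempty A is the lowest point of a
   segment from some a in A to o that is still an upper bound of A; it exists
   because betweenness is a closed condition.

   (ii) In an upper-semilinear metric join-semilattice the points between x and
   y are exactly those of the order intervals [x, x \/ y] and [y, x \/ y], and
   two of them at the same distance from x coincide, so every segment [x y] is
   this set.  The tripod condition follows by comparing x \/ y with x \/ z and
   z \/ y, which lie in the linearly ordered cone above z. *)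

Definition between {X : Type} (rho : X -> X -> R) (x y z : X) : Prop :=
  rho x z + rho z y = rho x y.

Definition root_order {X : Type} (rho : X -> X -> R) (o x y : X) : Prop :=
  between rho x o y.

Section PairSup.

Context {X : Type} (le : X -> X -> Prop).

Lemma pair_sup_l {x y s} : is_sup le (pair_set x y) s -> le x s.
Proof. intros [ub _]. apply ub. now left. Qed.

Lemma pair_sup_r {x y s} : is_sup le (pair_set x y) s -> le y s.
Proof. intros [ub _]. apply ub. now right. Qed.

Lemma pair_sup_least {x y s u} :
  is_sup le (pair_set x y) s -> le x u -> le y u -> le s u.
Proof. intros [_ least] Hx Hy. apply least. now intros a [-> | ->]. Qed.

Lemma pair_sup_sym {x y s} : is_sup le (pair_set x y) s -> is_sup le (pair_set y x) s.
Proof.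
  intros Hs. split.
  - intros a [-> | ->]; [exact (pair_sup_r Hs) | exact (pair_sup_l Hs)].
  - intros u Hu. apply (pair_sup_least Hs); apply Hu; [right | left]; reflexivity.
Qed.

End PairSup.

Lemma inf_approx (E : R -> Prop) (lb t0 : R) :
  E t0 -> (forall t, E t -> lb <= t) ->
  exists m, lb <= m <= t0 /\ (forall t, E t -> m <= t) /\
            (forall e, 0 < e -> exists t, E t /\ t < m + e).
Proof.
  intros Et0 Hlb.
  set (L := fun l => forall t, E t -> l <= t).
  destruct (completeness L) as [m [Hub Hleast]].
  - exists t0. intros l Hl. apply Hl, Et0.
  - exists lb. exact Hlb.
  - assert (HmE : forall t, E t -> m <= t).
    { intros t Et. apply Hleast. intros l Hl. apply Hl, Et. }
    exists m. split; [split|split; [exact HmE|]].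
    + exact (Hub lb Hlb).
    + apply HmE, Et0.
    + intros e He. apply NNPP. intros Hno.
      assert (Lme : L (m + e)).
      { intros t Et. apply Rnot_lt_le. intros Ht. apply Hno. now exists t. }
      specialize (Hub _ Lme). lra.
Qed.

Section Metric.

Context {X : Type} (rho : X -> X -> R).
Hypothesis rho_metric : is_metric rho.

Lemma dist_ge0 x y : 0 <= rho x y.
Proof. apply rho_metric. Qed.

Lemma dist_eq0 x y : rho x y = 0 -> x = y.
Proof. apply rho_metric. Qed.

Lemma dist_xx x : rho x x = 0.
Proof. now apply rho_metric. Qed.

Lemma dist_sym x y : rho x y = rho y x.
Proof. apply rho_metric. Qed.

Lemma dist_triangle x y z : rho x z <= rho x y + rho y z.
Proof. apply rho_metric. Qed.

Lemma between_sym x y z : between rho x y z -> between rho y x z.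
Proof.
  unfold between. rewrite (dist_sym y z), (dist_sym z x), (dist_sym y x). lra.
Qed.

Lemma between_trans a b c d :
  between rho a b c -> between rho a c d -> between rho a b d.
Proof.
  unfold between. intros Hc Hd.
  pose proof (dist_triangle d c b). pose proof (dist_triangle a d b). lra.
Qed.

Lemma between_backtrack_eq x y c u :
  between rho x c u -> between rho y c u -> between rho x y c -> u = c.
Proof.
  unfold between. intros Hx Hy Hc.
  pose proof (dist_triangle x u y). pose proof (dist_ge0 u c).
  rewrite (dist_sym u y) in *. rewrite (dist_sym c y) in Hc.
  apply dist_eq0. lra.
Qed.

Lemma between_closed x y z :
  (forall e, 0 < e -> exists w, between rho x y w /\ rho z w < e) -> between rho x y z.
Proof.
  intros Happrox. unfold between.
  pose proof (dist_triangle x z y).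
  destruct (Rle_or_lt (rho x z + rho z y) (rho x y)) as [|Hgt]; [lra|].
  destruct (Happrox ((rho x z + rho z y - rho x y) / 2)) as (w & Hw & Hzw); [lra|].
  unfold between in Hw.
  pose proof (dist_triangle x w z). pose proof (dist_triangle z w y).
  rewrite (dist_sym w z) in *. lra.
Qed.

Lemma root_order_refl o x : root_order rho o x x.
Proof. unfold root_order, between. rewrite dist_xx. lra. Qed.

Lemma root_order_top o x : root_order rho o x o.
Proof. unfold root_order, between. rewrite dist_xx. lra. Qed.

Lemma root_order_antisym o x y :
  root_order rho o x y -> root_order rho o y x -> x = y.
Proof.
  unfold root_order, between. intros Hxy Hyx.
  pose proof (dist_ge0 x y). rewrite (dist_sym y x) in Hyx. apply dist_eq0. lra.
Qed.

Lemma root_order_trans o x y z :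
  root_order rho o x y -> root_order rho o y z -> root_order rho o x z.
Proof.
  intros Hxy Hyz. apply between_sym.
  apply (between_trans (c := y)); now apply between_sym.
Qed.

Lemma root_order_between o x y z :
  root_order rho o x z -> root_order rho o z y -> between rho x y z.
Proof.
  intros Hxz Hzy. pose proof (root_order_trans Hxz Hzy) as Hxy.
  unfold root_order, between in *. lra.
Qed.

Lemma isometry_between {g : R -> X} {a b s t u : R} :
  (forall s t, a <= s <= b -> a <= t <= b -> rho (g s) (g t) = Rabs (s - t)) ->
  a <= s -> s <= t -> t <= u -> u <= b -> between rho (g s) (g u) (g t).
Proof.
  intros iso Has Hst Htu Hub. unfold between.
  rewrite !iso by lra. rewrite !Rabs_left1 by lra. lra.
Qed.

Lemma segment_between {x y S z} : is_segment rho x y S -> S z -> between rho x y z.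
Proof.
  intros (a & b & g & Hab & iso & <- & <- & HS) Sz.
  apply HS in Sz as (t & Ht & <-).
  apply (isometry_between iso); lra.
Qed.

Lemma segment_between_total {x y S u v} :
  is_segment rho x y S -> S u -> S v -> between rho u y v \/ between rho v y u.
Proof.
  intros (a & b & g & Hab & iso & _ & <- & HS) Su Sv.
  apply HS in Su as (s & Hs & <-). apply HS in Sv as (t & Ht & <-).
  destruct (Rle_or_lt s t); [left | right]; apply (isometry_between iso); lra.
Qed.

Lemma segment_point_at x y S d :
  is_segment rho x y S -> 0 <= d <= rho x y -> exists w, S w /\ rho x w = d.
Proof.
  intros (a & b & g & Hab & iso & <- & <- & HS) Hd.
  rewrite iso, Rabs_left1 in Hd by lra.
  exists (g (a + d)). split.
  - apply HS. exists (a + d). split; [lra | reflexivity].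
  - rewrite iso, Rabs_left1 by lra. lra.
Qed.

Lemma segment_contains_between x y S z :
  is_segment rho x y S -> between rho x y z ->
  (forall w, S w -> rho x w = rho x z -> w = z) -> S z.
Proof.
  intros HS Hz Hdet.
  destruct (segment_point_at (d := rho x z) HS) as (w & Sw & Hw).
  - unfold between in Hz. pose proof (dist_ge0 x z). pose proof (dist_ge0 z y). lra.
  - now rewrite <- (Hdet w Sw Hw).
Qed.

Section Semilattice.

Variable le : X -> X -> Prop.
Hypothesis mjs : metric_join_semilattice rho le.

Lemma le_refl x : le x x.
Proof. apply mjs. Qed.

Lemma le_trans {x y z} : le x y -> le y z -> le x z.
Proof. apply mjs. Qed.

Lemma join_exists x y : exists s, is_sup le (pair_set x y) s.
Proof. apply mjs. Qed.

Lemma le_between {x y z} : le x z -> le z y -> between rho x y z.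
Proof. apply mjs. Qed.

Lemma join_between x y s : is_sup le (pair_set x y) s -> between rho x y s.
Proof. intros Hs. symmetry. now apply mjs. Qed.

Lemma rooted_le_iff o : has_root le o -> forall x y, le x y <-> between rho x o y.
Proof.
  intros root x y. split.
  - intros Hxy. now apply le_between.
  - intros Hy. destruct (join_exists x y) as [s Hs].
    replace y with s; [exact (pair_sup_l Hs)|].
    apply (between_backtrack_eq (x := x) (y := o)).
    + apply join_between, Hs.
    + apply between_sym, le_between; [exact (pair_sup_r Hs) | apply root].
    + exact Hy.
Qed.

Hypothesis usl : upper_semilinear le.

Lemma le_cone_total {x y z} : le x y -> le x z -> le y z \/ le z y.
Proof. apply usl. Qed.

Lemma le_dist_inj {x y z} : le x y -> le x z -> rho x y = rho x z -> y = z.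
Proof.
  intros Hy Hz Hd. destruct (le_cone_total Hy Hz) as [Hyz | Hzy].
  - pose proof (le_between Hy Hyz) as B. unfold between in B.
    apply dist_eq0. lra.
  - pose proof (le_between Hz Hzy) as B. unfold between in B.
    symmetry. apply dist_eq0. lra.
Qed.

Lemma between_of_le_join {x y s z} :
  is_sup le (pair_set x y) s -> le x z -> le z s -> between rho x y z.
Proof.
  intros Hs Hxz Hzs.
  apply (between_trans (c := s)); [apply join_between, Hs | now apply le_between].
Qed.

Lemma join_eq_of_between {x y z p q} :
  between rho x y z -> is_sup le (pair_set x z) p -> is_sup le (pair_set z y) q ->
  le p q -> p = z.
Proof.
  intros Hz Hp Hq Hpq.
  apply (between_backtrack_eq (x := x) (y := y)); [apply join_between, Hp | | exact Hz].
  apply between_sym, (between_trans (c := q)).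
  - apply join_between, Hq.
  - apply le_between; [exact (pair_sup_r Hp) | exact Hpq].
Qed.

Lemma between_above x y z : between rho x y z -> le x z \/ le y z.
Proof.
  intros Hz.
  destruct (join_exists x z) as [p Hp]. destruct (join_exists z y) as [q Hq].
  destruct (le_cone_total (pair_sup_r Hp) (pair_sup_l Hq)) as [Hpq | Hqp].
  - left. rewrite <- (join_eq_of_between Hz Hp Hq Hpq). exact (pair_sup_l Hp).
  - right. apply pair_sup_sym in Hp, Hq.
    rewrite <- (join_eq_of_between (between_sym Hz) Hq Hp Hqp). exact (pair_sup_l Hq).
Qed.

Lemma between_le_join {x y s z} :
  is_sup le (pair_set x y) s -> between rho x y z -> le z s.
Proof.
  intros Hs Hz.
  assert (Hcmp : le z s \/ le s z).
  { destruct (between_above Hz) as [Hxz | Hyz].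
    - exact (le_cone_total Hxz (pair_sup_l Hs)).
    - exact (le_cone_total Hyz (pair_sup_r Hs)). }
  destruct Hcmp as [| Hsz]; [assumption|].
  replace z with s; [apply le_refl|].
  apply (between_backtrack_eq (x := x) (y := y)); [| | exact Hz];
    apply le_between; auto; [exact (pair_sup_l Hs) | exact (pair_sup_r Hs)].
Qed.

Lemma between_opposite_sides_eq {x y s z w} :
  is_sup le (pair_set x y) s -> le x z -> le z s -> le y w -> le w s ->
  between rho x y w -> rho x z = rho x w -> z = w.
Proof.
  (* z is no farther from x than s is, and w is no nearer. *)
  intros Hs Hxz Hzs Hyw Hws Hw Hd.
  pose proof (le_between Hxz Hzs) as Bz. pose proof (le_between Hyw Hws) as Bw.
  pose proof (join_between Hs) as Bs. unfold between in *.
  pose proof (dist_ge0 z s). pose proof (dist_ge0 w s).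
  rewrite (dist_sym w y), (dist_sym s y) in *.
  assert (Ez : z = s) by (apply dist_eq0; lra).
  assert (Ew : w = s) by (apply dist_eq0; lra).
  congruence.
Qed.

Lemma between_dist_inj x y z w :
  between rho x y z -> between rho x y w -> rho x z = rho x w -> z = w.
Proof.
  intros Hz Hw Hd. destruct (join_exists x y) as [s Hs].
  pose proof (between_le_join Hs Hz) as Hzs. pose proof (between_le_join Hs Hw) as Hws.
  destruct (between_above Hz) as [Hxz | Hyz], (between_above Hw) as [Hxw | Hyw].
  - exact (le_dist_inj Hxz Hxw Hd).
  - exact (between_opposite_sides_eq Hs Hxz Hzs Hyw Hws Hw Hd).
  - symmetry. exact (between_opposite_sides_eq Hs Hxw Hws Hyz Hzs Hz (eq_sym Hd)).
  - apply (le_dist_inj Hyz Hyw). unfold between in *.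
    rewrite (dist_sym y z), (dist_sym y w). lra.
Qed.

Lemma semilattice_segment_between x y S z :
  is_segment rho x y S -> between rho x y z -> S z.
Proof.
  intros HS Hz. apply (segment_contains_between HS Hz).
  intros w Sw Hd. exact (between_dist_inj (segment_between HS Sw) Hz Hd).
Qed.

Lemma between_tripod_l {x y} z {w} :
  between rho x y w -> le x w -> between rho x z w \/ between rho z y w.
Proof.
  intros Hw Hxw.
  destruct (join_exists x y) as [s Hs].
  destruct (join_exists x z) as [p Hp]. destruct (join_exists z y) as [q Hq].
  pose proof (between_le_join Hs Hw) as Hws.
  assert (Hsup : le s p \/ le s q).
  { destruct (le_cone_total (pair_sup_r Hp) (pair_sup_l Hq)) as [Hpq | Hqp].
    - right. apply (pair_sup_least Hs); [| exact (pair_sup_r Hq)].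
      exact (le_trans (pair_sup_l Hp) Hpq).
    - left. apply (pair_sup_least Hs); [exact (pair_sup_l Hp) |].
      exact (le_trans (pair_sup_r Hq) Hqp). }
  destruct Hsup as [Hsp | Hsq].
  - left. exact (between_of_le_join Hp Hxw (le_trans Hws Hsp)).
  - destruct (le_cone_total Hxw (pair_sup_l Hp)) as [Hwp | Hpw].
    + left. exact (between_of_le_join Hp Hxw Hwp).
    + right. apply (between_of_le_join Hq).
      * exact (le_trans (pair_sup_r Hp) Hpw).
      * exact (le_trans Hws Hsq).
Qed.

Lemma between_tripod x y z w :
  between rho x y w -> between rho x z w \/ between rho z y w.
Proof.
  intros Hw. destruct (between_above Hw) as [Hxw | Hyw].
  - exact (between_tripod_l z Hw Hxw).
  - destruct (between_tripod_l z (between_sym Hw) Hyw) as [H | H];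
      [right | left]; now apply between_sym.
Qed.

Theorem semilattice_R_tree : geodesic rho -> R_tree rho.
Proof.
  intros geo. split; [exact geo | split].
  - intros x y S1 S2 HS1 HS2 z. split; intros Hz.
    + exact (semilattice_segment_between HS2 (segment_between HS1 Hz)).
    + exact (semilattice_segment_between HS1 (segment_between HS2 Hz)).
  - intros x y z Sxy Sxz Szy HSxy HSxz HSzy w Hw.
    destruct (between_tripod z (segment_between HSxy Hw)); [left | right];
      eapply semilattice_segment_between; eassumption.
Qed.

Lemma rooted_sup_exists o (A : X -> Prop) :
  geodesic rho -> has_root le o -> (exists a, A a) -> exists s, is_sup le A s.
Proof.
  intros geo root [a0 Aa0].
  destruct (geo a0 o) as [S HS].
  pose proof HS as (a & b & g & Hab & iso & _ & gb & HSg).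
  set (E := fun t => a <= t <= b /\ forall x, A x -> le x (g t)).
  destruct (@inf_approx E a b) as (m & Hm & HmE & Happrox).
  { split; [lra|]. intros x _. rewrite gb. apply root. }
  { intros t [Ht _]. lra. }
  exists (g m). split.
  - intros x Ax. apply (rooted_le_iff root), between_closed.
    intros e He. destruct (Happrox e He) as (t & Et & Hte).
    pose proof (HmE t Et). destruct Et as [Ht Hup].
    exists (g t). split.
    + apply (rooted_le_iff root), Hup, Ax.
    + rewrite iso, Rabs_left1 by lra. lra.
  - intros u Hu.
    assert (Su : S u).
    { apply (semilattice_segment_between HS), (rooted_le_iff root), Hu, Aa0. }
    apply HSg in Su as (t & Ht & <-).
    assert (m <= t) by (apply HmE; split; assumption).
    apply (rooted_le_iff root). rewrite <- gb. apply (isometry_between iso); lra.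
Qed.

End Semilattice.

Section Tree.

Hypothesis tree : R_tree rho.

Lemma tree_segment_between x y S z :
  is_segment rho x y S -> between rho x y z -> S z.
Proof.
  destruct tree as (geo & _ & tripod).
  intros HS Hz. apply (segment_contains_between HS Hz). intros w Sw Hd.
  destruct (geo x z) as [Sxz HSxz]. destruct (geo z y) as [Szy HSzy].
  pose proof (segment_between HS Sw) as Bw. unfold between in *.
  destruct (tripod x y z S Sxz Szy HS HSxz HSzy w Sw) as [Hw | Hw].
  - pose proof (segment_between HSxz Hw) as B. unfold between in B.
    apply dist_eq0. lra.
  - pose proof (segment_between HSzy Hw) as B. unfold between in B.
    symmetry. apply dist_eq0. lra.
Qed.

Lemma tree_root_order_usl o : upper_semilinear (root_order rho o).
Proof.
  intros x y z Hy Hz. destruct (proj1 tree x o) as [S HS].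
  exact (segment_between_total HS (tree_segment_between HS Hy)
                                  (tree_segment_between HS Hz)).
Qed.

(* The branch point lies on [x o] at distance (y|o)_x, the Gromov product. *)
Lemma tree_branch_point o x y :
  exists c, root_order rho o x c /\ root_order rho o y c /\ between rho x y c.
Proof.
  destruct tree as (geo & _ & tripod).
  destruct (geo x o) as [S HS].
  destruct (segment_point_at (d := (rho x y + rho x o - rho y o) / 2) HS) as (c & Sc & Hc).
  { pose proof (dist_triangle y x o). pose proof (dist_triangle x o y).
    rewrite (dist_sym y x), (dist_sym o y) in *. lra. }
  exists c. pose proof (segment_between HS Sc) as Bc.
  destruct (geo x y) as [Sxy HSxy]. destruct (geo y o) as [Syo HSyo].
  destruct (tripod x o y S Sxy Syo HS HSxy HSyo c Sc) as [Hc' | Hc'];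
    [pose proof (segment_between HSxy Hc') as B | pose proof (segment_between HSyo Hc') as B];
    unfold root_order, between in *; rewrite (dist_sym c y) in *; repeat split; lra.
Qed.

Lemma tree_join o x y :
  exists c, is_sup (root_order rho o) (pair_set x y) c /\ between rho x y c.
Proof.
  destruct (tree_branch_point o x y) as (c & Hxc & Hyc & Bc).
  exists c. split; [split | exact Bc].
  - now intros a [-> | ->].
  - intros u Hu.
    assert (Hxu := Hu x (or_introl eq_refl)). assert (Hyu := Hu y (or_intror eq_refl)).
    destruct (tree_root_order_usl Hxc Hxu) as [| Huc]; [assumption|].
    replace c with u; [apply root_order_refl|].
    exact (between_backtrack_eq (root_order_between Hxu Huc)
                                (root_order_between Hyu Huc) Bc).
Qed.

Lemma tree_root_order o : usl_mjs_rooted rho (root_order rho o) o.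
Proof.
  split; [split; [split | split] | split].
  - split; [|split]; intros.
    + apply root_order_refl.
    + eapply root_order_antisym; eassumption.
    + eapply root_order_trans; eassumption.
  - intros x y. destruct (tree_join o x y) as (c & Hc & _). now exists c.
  - intros x y z. apply root_order_between.
  - intros x y s Hs. destruct (tree_join o x y) as (c & Hc & Bc).
    replace s with c; [symmetry; exact Bc|].
    apply root_order_antisym with o; [apply Hc, Hs | apply Hs, Hc].
  - apply tree_root_order_usl.
  - intros x. apply root_order_top.
Qed.

End Tree.

End Metric.

Theorem theorem1 (X : Type) (rho : X -> X -> R) :
  is_metric rho -> geodesic rho ->
  (R_tree rho ->
     forall o : X,
       (exists le : X -> X -> Prop,
          usl_mjs_rooted rho le o /\
          (forall le' : X -> X -> Prop, usl_mjs_rooted rho le' o ->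
             forall x y, le' x y <-> le x y)) /\
       (forall le : X -> X -> Prop, usl_mjs_rooted rho le o ->
          forall A : X -> Prop, (exists a, A a) -> exists s, is_sup le A s))
  /\
  ((exists le : X -> X -> Prop,
      metric_join_semilattice rho le /\ upper_semilinear le) ->
   R_tree rho).
Proof.
  intros metric geo. split.
  - intros tree o. split.
    + exists (root_order rho o). split; [exact (tree_root_order metric tree o)|].
      intros le (mjs & _ & root). exact (rooted_le_iff metric mjs root).
    + intros le (mjs & usl & root) A. exact (rooted_sup_exists metric mjs usl A geo root).
  - intros (le & mjs & usl). exact (semilattice_R_tree metric mjs usl geo).
Qed.
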